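(* Let $U$ be a unicyclic graph with an edge $\ell u\in E(U)$ such that $\deg(\ell)=1$ and $u\in V(\operatorname{Cycles}(U))$. (i) If $v\in V(\operatorname{Cycles}(U))$, $v\neq u$ and $\deg(v)>2$, then there exists a u-switch $\tau$ over $U$ such that $\ell v\in E(\tau(U))$. (ii) If $v\notin V(\operatorname{Cycles}(U))$ and $\deg(v)\ge2$, then there exists a u-switch $\tau$ over $U$ such that $\ell v\in E(\tau(U))$.
   Context: Graphs are finite, simple, undirected, labeled. A unicyclic graph is a connected graph with exactly one cycle. For vertices $a,b,c,d$, $A=\binom{a\ b}{c\ d}$ is interchangeable in $G$ if $ab,cd\in E(G)$, $\{a,b\}\cap\{c,d\}=\varnothing$, $ac,bd\notin E(G)$; the 2-switch $\tau_A$ sends $G$ to $G-ab-cd+ac+bd$ if $A$ is interchangeable and to $G$ otherwise (trivial). A nontrivial 2-switch $\tau$ over a unicyclic $U$ is a u-switch if $\tau(U)$ is unicyclic. $\operatorname{Cycles}(G)$ is the subgraph induced by vertices lying on some cycle of $G$. *)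

From mathcomp Require Import all_boot.
Set Implicit Arguments. Unset Strict Implicit. Unset Printing Implicit Defensive.

Section Graphs.
Variable T : finType.

Definition simple_graph (g : rel T) : Prop := symmetric g /\ irreflexive g.

Definition connected_graph (g : rel T) : Prop := forall x y, connect g x y.

Definition is_cycle (g : rel T) (c : seq T) : bool :=
  [&& 3 <= size c, uniq c & cycle g c].

(* the edge set of the cycle c (edges as 2-element vertex sets); two cycle
   sequences denote the same cycle (subgraph) iff they have the same edges *)
Definition cycle_edges (c : seq T) : {set {set T}} :=
  [set [set x; next c x] | x in c].

Definition has_unique_cycle (g : rel T) : Prop :=
  exists c, is_cycle g c /\
    forall c', is_cycle g c' -> cycle_edges c' = cycle_edges c.

Definition unicyclic (g : rel T) : Prop :=
  [/\ simple_graph g, connected_graph g & has_unique_cycle g].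

Definition on_cycle (g : rel T) (v : T) : Prop :=
  exists c, is_cycle g c /\ v \in c.

Definition deg (g : rel T) (v : T) : nat := #|[set w | g v w]|.

Definition same_edge (x y a b : T) : bool :=
  ((x == a) && (y == b)) || ((x == b) && (y == a)).

Definition interchangeable (g : rel T) (a b c d : T) : bool :=
  [&& g a b, g c d, [disjoint [set a; b] & [set c; d]], ~~ g a c & ~~ g b d].

Definition two_switch (g : rel T) (a b c d : T) : rel T :=
  if interchangeable g a b c d then
    fun x y => (g x y && ~~ same_edge x y a b && ~~ same_edge x y c d)
               || same_edge x y a c || same_edge x y b d
  else g.

Definition u_switch (g : rel T) (a b c d : T) : Prop :=
  interchangeable g a b c d /\ unicyclic (two_switch g a b c d).

End Graphs.

(* Pick a neighbour w of v such that vw is not a cycle edge, and a neighbour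
   z <> w of v that u reaches without passing through v (the successor of v on
   the cycle in case (i), the last vertex before v on a path from u in case
   (ii)); the u-switch is (l u / v w), which trades lu and vw for lv and uw.
   Let W be the component of w in U - v.  As vw lies on no cycle, w is the only
   neighbour of v in W, and u is not in W since it reaches z.  So in the new
   graph uw is the only edge leaving W and l is still a leaf: neither new edge
   lies on a cycle, every new cycle is an old one, and the old cycle survives
   because lu and vw are not on it.  The walk l v z ... u w reconnects the two
   removed edges. *)

From mathcomp Require Import all_boot.
Set Implicit Arguments. Unset Strict Implicit. Unset Printing Implicit Defensive.

Section Graphs.
Variable T : finType.
Implicit Types (e g : rel T) (cy p : seq T) (x y a b c d u v w : T).

Lemma same_edgeC x y a b : same_edge x y a b = same_edge y x a b.
Proof. by rewrite /same_edge orbC [(y == _) && _]andbC [(y == b) && _]andbC. Qed.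

Lemma same_edge_set2 x y a b : same_edge x y a b -> [set x; y] = [set a; b].
Proof. by case/orP=> /andP[/eqP-> /eqP->]; rewrite // setUC. Qed.

Lemma disjoint_set2 a b c d :
  [disjoint [set a; b] & [set c; d]] = [&& a != c, a != d, b != c & b != d].
Proof. by rewrite disjoints_subset subUset !sub1set !inE !negb_or -!andbA. Qed.

Lemma cycle_edges_mem cy x y : [set x; y] \in cycle_edges cy -> x \in cy.
Proof.
case/imsetP=> z zc E; have /set2P[->|->] // : x \in [set z; next cy z] by rewrite -E set21.
by rewrite mem_next.
Qed.

Lemma eq_cycle_edges_mem (cy1 cy2 : seq T) x :
  cycle_edges cy1 = cycle_edges cy2 -> x \in cy1 -> x \in cy2.
Proof.
move=> E xcy; apply: (@cycle_edges_mem _ x (next cy1 x)).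
by rewrite -E; apply/imsetP; exists x.
Qed.

Lemma cycle_edge_next_prev cy v w : uniq cy -> v != w ->
  [set v; w] \in cycle_edges cy -> w = next cy v \/ w = prev cy v.
Proof.
move=> ucy vw /imsetP[x _ E].
have /set2P vE : v \in [set x; next cy x] by rewrite -E set21.
have /set2P wE : w \in [set x; next cy x] by rewrite -E set22.
case: vE wE vw => -> [] ->; rewrite ?eqxx // => _; first by left.
by right; rewrite prev_next.
Qed.

Lemma deg1_nbr e x u y : deg e x = 1 -> e x u -> e x y -> y = u.
Proof.
rewrite /deg => /eqP/cards1P[t Nx] exu exy.
have : u \in [set w | e x w] by rewrite inE.
have : y \in [set w | e x w] by rewrite inE.
by rewrite Nx => /set1P-> /set1P->.
Qed.

Lemma deg_nbr_notin e v (B : {set T}) :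
  #|B| < deg e v -> exists2 w, e v w & w \notin B.
Proof.
move=> ltBv; have : ~~ ([set w | e v w] \subset B).
  by apply: contraTN ltBv => /subset_leq_card; rewrite /deg -leqNgt.
by case/subsetPn=> w; rewrite inE; exists w.
Qed.

Section TwoSwitch.
Variables (g : rel T) (a b c d : T).
Let g' := two_switch g a b c d.

Lemma two_switchE x y : interchangeable g a b c d ->
  g' x y = (g x y && ~~ same_edge x y a b && ~~ same_edge x y c d)
           || same_edge x y a c || same_edge x y b d.
Proof. by rewrite /g' /two_switch => ->. Qed.

Variant two_switch_spec x y : Prop :=
  | TwoSwitchKeep of g x y & ~~ same_edge x y a b & ~~ same_edge x y c d
  | TwoSwitchAC of x = a & y = c
  | TwoSwitchCA of x = c & y = a
  | TwoSwitchBD of x = b & y = d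
  | TwoSwitchDB of x = d & y = b.

Lemma two_switchP x y : interchangeable g a b c d -> g' x y -> two_switch_spec x y.
Proof.
move=> Hi; rewrite two_switchE // => /orP[/orP[/andP[/andP[]]|]|]; first exact: TwoSwitchKeep.
- by case/orP=> /andP[/eqP-> /eqP->]; [apply: TwoSwitchAC | apply: TwoSwitchCA].
- by case/orP=> /andP[/eqP-> /eqP->]; [apply: TwoSwitchBD | apply: TwoSwitchDB].
Qed.

Lemma two_switch_sym : symmetric g -> symmetric g'.
Proof.
move=> gsym x y; rewrite /g' /two_switch; case: ifP => // _.
by rewrite gsym !(same_edgeC x).
Qed.

Lemma two_switch_irr : irreflexive g -> irreflexive g'.
Proof.
move=> girr x; rewrite /g' /two_switch.
case: ifP => [/and5P[_ _ /[!disjoint_set2] /and4P[ac _ _ bd] _] | _]; last exact: girr.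
have loopN y z : y != z -> same_edge x x y z = false.
  by move=> yz; apply: contraNF yz => /orP[] /andP[/eqP <- /eqP <-].
by rewrite girr (loopN _ _ ac) (loopN _ _ bd).
Qed.

Lemma two_switch_cycle cy : is_cycle g cy ->
  [set a; b] \notin cycle_edges cy -> [set c; d] \notin cycle_edges cy ->
  is_cycle g' cy.
Proof.
rewrite /g' /two_switch; case: ifP => // _ /and3P[sz ucy gcy] abN cdN.
rewrite /is_cycle sz ucy; apply: (cycle_from_next ucy) => x xcy.
have Ex : [set x; next cy x] \in cycle_edges cy by apply/imsetP; exists x.
rewrite (next_cycle gcy xcy) /=; apply/orP; left; apply/orP; left.
by apply/andP; split; [apply: contraNN abN | apply: contraNN cdN] => /same_edge_set2 <-.
Qed.

Lemma two_switch_connected : symmetric g -> connected_graph g ->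
  interchangeable g a b c d -> connect g' a b -> connect g' c d ->
  connected_graph g'.
Proof.
move=> gsym gcon Hi Cab Ccd x y; apply: connect_sub (gcon x y) => s t gst.
have csym := sym_connect_sym (two_switch_sym gsym).
case: (boolP (same_edge s t a b)) => [|abN].
  by case/orP=> /andP[/eqP-> /eqP->] //; rewrite csym.
case: (boolP (same_edge s t c d)) => [|cdN].
  by case/orP=> /andP[/eqP-> /eqP->] //; rewrite csym.
by apply: connect1; rewrite two_switchE // gst abN cdN.
Qed.

End TwoSwitch.

Lemma is_cycle_split e cy x : is_cycle e cy -> x \in cy ->
  exists b q, [/\ cy =i x :: next cy x :: rcons q b, path e (next cy x) (rcons q b),
                  e b x & uniq (x :: next cy x :: rcons q b)].
Proof.
case/and3P=> sz ucy ecy /rot_to[i s Ds].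
have : 3 <= size (x :: s) by rewrite -Ds size_rot.
have : cycle e (x :: s) by rewrite -Ds rot_cycle.
have : uniq (x :: s) by rewrite -Ds rot_uniq.
have -> : next cy x = next (x :: s) x by rewrite -Ds next_rot.
have memE : cy =i x :: s by move=> y; rewrite -Ds mem_rot.
case: s Ds memE => [|a s] //=; case/lastP: s => [|q b] //= _ memE us.
rewrite eqxx rcons_path last_rcons => /andP[_ /andP[pq ebx]] _.
by exists b, q.
Qed.

Lemma leaf_notin_cycle e cy x t : symmetric e -> is_cycle e cy ->
  (forall y, e x y -> y = t) -> x \notin cy.
Proof.
move=> e_sym ecy leaf; apply/negP => xcy.
have exn : e x (next cy x) by case/and3P: ecy => _ _ /next_cycle; apply.
have [b [q [_ _ ebx uq]]] := is_cycle_split ecy xcy.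
have exb : e x b by rewrite e_sym.
by move: uq; rewrite (leaf _ exn) (leaf _ exb) /= mem_rcons mem_head andbF.
Qed.

Definition avoid e v : rel T := [rel s t | [&& e s t, s != v & t != v]].

Lemma avoid_sym e v : symmetric e -> symmetric (avoid e v).
Proof. by move=> e_sym s t; rewrite /avoid /= e_sym [(s != v) && _]andbC. Qed.

Lemma path_avoid e v s p : path e s p -> v \notin s :: p -> path (avoid e v) s p.
Proof.
elim: p s => //= t p IH s /andP[est tp]; rewrite !in_cons !negb_or => /and3P[vs vt vp].
rewrite IH ?in_cons ?negb_or ?vt // andbT.
by rewrite /avoid /= est (eq_sym s) (eq_sym t) vs vt.
Qed.

Lemma connect_avoid_eq e v x y : connect (avoid e v) x y -> (x == v) = (y == v).
Proof.
have closedv : closed (avoid e v) (predC1 v).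
  by move=> s t /and3P[_ sv tv]; rewrite !inE sv tv.
by move/(closed_connect closedv); rewrite !inE => /negb_inj.
Qed.

Lemma connect_avoid_last e v x : connect e x v -> x != v ->
  exists2 z, connect (avoid e v) x z & e z v.
Proof.
case/connectP=> p xp vE xv; have : v \in p.
  by move: (mem_last x p); rewrite -vE in_cons eq_sym (negbTE xv).
elim: p x xp xv {vE} => //= y p IH x /andP[exy yp] xv; rewrite in_cons.
case: (eqVneq v y) => [-> _ | vy /= vp]; first by exists x.
have [|z yz ezv] := IH y yp _ vp; first by rewrite eq_sym.
exists z => //; apply: connect_trans yz; apply: connect1.
by rewrite /avoid /= exy xv eq_sym vy.
Qed.

Lemma connect_avoid_cycle e v w x : irreflexive e ->
  connect (avoid e v) w x -> x != w -> e x v -> e v w ->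
  exists2 cy, is_cycle e cy & [set v; w] \in cycle_edges cy.
Proof.
move=> e_irr /connectP[p wp ->] + exv evw.
case: (shortenP wp) exv => p' wp' up' _ exv xw.
have wv : w != v by apply: contraTneq evw => ->; rewrite e_irr.
have vp' : v \notin w :: p'.
  by apply/negP => /(path_connect wp') /connect_avoid_eq; rewrite eqxx (negbTE wv).
exists [:: v, w & p']; last by apply/imsetP; exists v; rewrite ?mem_head // next_nth mem_head /= eqxx.
apply/and3P; split; first by case: p' xw {wp' up' vp' exv} => //=; rewrite eqxx.
  by rewrite cons_uniq vp' up'.
rewrite /= evw rcons_path exv andbT.
by apply: sub_path wp' => s t /and3P[].
Qed.

Lemma cycle_connect_avoid e cy v y y' : symmetric e -> is_cycle e cy ->
  v \in cy -> y \in cy -> y' \in cy -> y != v -> y' != v -> connect (avoid e v) y y'.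
Proof.
move=> e_sym ecy vcy ycy y'cy yv y'v.
have [b [q [cyE pq _ uq]]] := is_cycle_split ecy vcy.
have /path_connect reach : path (avoid e v) (next cy v) (rcons q b).
  by apply: path_avoid pq _; case/andP: uq.
have onpath z : z \in cy -> z != v -> z \in next cy v :: rcons q b.
  by rewrite cyE in_cons => /orP[/eqP-> | //]; rewrite eqxx.
apply: connect_trans (reach _ (onpath _ y'cy y'v)).
by rewrite (sym_connect_sym (avoid_sym v e_sym)) reach // onpath.
Qed.

Lemma cut_edge_not_next e (P : pred T) cy x y : symmetric e -> is_cycle e cy ->
  x \in cy -> P y -> ~~ P x ->
  (forall s t, e s t -> P s -> ~~ P t -> s = y /\ t = x) -> next cy x != y.
Proof.
move=> e_sym ecy xcy Py Px cut; apply/eqP => nxy.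
have [b [q [_ pq ebx uq]]] := is_cycle_split ecy xcy; rewrite nxy in pq uq.
(* P cannot be left along the arc from y to b, which avoids x; so the closing
   edge b x is the one leaving P, forcing b = y. *)
have closedP : closed (avoid e x) P.
  apply: (intro_closed (sym_connect_sym (avoid_sym x e_sym))) => s t /and3P[est _ tx] Ps.
  by apply: contraNT tx => /(cut _ _ est Ps) [_ ->].
have Pb : P b.
  have xN : x \notin y :: rcons q b by case/andP: uq.
  have reach : connect (avoid e x) y b.
    by apply: (path_connect (path_avoid pq xN)); rewrite in_cons mem_rcons mem_head orbT.
  by rewrite -[P b]/(b \in P) -(closed_connect closedP reach).
have [bE _] := cut _ _ ebx Pb Px.
by move: uq; rewrite bE /= mem_rcons mem_head andbF.
Qed.

End Graphs.

Section LeafMove.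
Variables (T : finType) (U : rel T) (cy : seq T) (l u v w z : T).
Hypotheses (U_sym : symmetric U) (U_irr : irreflexive U) (U_con : connected_graph U)
  (U_cy : is_cycle U cy)
  (cy_unique : forall cy', is_cycle U cy' -> cycle_edges cy' = cycle_edges cy)
  (Ulu : U l u) (l_leaf : forall y, U l y -> y = u)
  (Uvw : U v w) (Uzv : U z v) (zw : z != w) (uz : connect (avoid U v) u z)
  (vw_off : [set v; w] \notin cycle_edges cy).

Let W : pred T := connect (avoid U v) w.

Let zv : z != v. Proof. by apply: contraTneq Uzv => ->; rewrite U_irr. Qed.
Let uv : u != v. Proof. by rewrite (connect_avoid_eq uz). Qed.
Let W_w : W w. Proof. exact: connect0. Qed.

Let vNW : ~~ W v.
Proof.
apply/negP => /connect_avoid_eq; rewrite eqxx => /eqP wv.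
by move: Uvw; rewrite wv U_irr.
Qed.

Let W_exit x y : W x -> U x y -> ~~ W y -> y = v.
Proof.
move=> Wx Uxy; apply: contraNeq => yv; apply/(connect_trans Wx)/connect1.
by rewrite /avoid /= Uxy yv andbT; apply: contraNneq vNW => <-.
Qed.

Let W_nbr_v x : W x -> U x v -> x = w.
Proof.
move=> Wx Uxv; apply/eqP; apply: contraNT vw_off => xw.
have [cy' U_cy' vw_on] := connect_avoid_cycle U_irr Wx xw Uxv Uvw.
by rewrite -(cy_unique U_cy').
Qed.

Let uNW : ~~ W u.
Proof.
apply/negP => Wu; have Wz : W z := connect_trans Wu uz.
by move: zw; rewrite (W_nbr_v Wz Uzv) eqxx.
Qed.

Let lNW : ~~ W l.
Proof. by apply/negP => Wl; move: uv; rewrite (W_exit Wl Ulu uNW) eqxx. Qed.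

Let lv : l != v.
Proof. by apply/eqP => lE; move: uNW; rewrite -(l_leaf (y := w)) ?lE ?W_w. Qed.
Let lw : l != w. Proof. by apply: contraNneq lNW => ->. Qed.
Let uw : u != w. Proof. by apply: contraNneq uNW => ->. Qed.

Let switchable : interchangeable U l u v w.
Proof.
rewrite /interchangeable Ulu Uvw disjoint_set2 lv lw uv uw /=.
apply/andP; split; apply/negP.
  by move/l_leaf => vu; move: uv; rewrite vu eqxx.
by rewrite U_sym => /(W_exit W_w)/(_ uNW) uE; move: uv; rewrite uE eqxx.
Qed.

Let g := two_switch U l u v w.
Let g_sym : symmetric g. Proof. exact: two_switch_sym. Qed.

Let g_new : g l v && g u w.
Proof. by rewrite /g !two_switchE // /same_edge !eqxx !orbT. Qed.

Let g_leaf y : g l y -> y = v.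
Proof.
case/(two_switchP switchable) => [Uly luN _ | // | lE _ | lE _ | lE _].
- by move: luN; rewrite (l_leaf Uly) /same_edge !eqxx.
- by move: lv; rewrite lE eqxx.
- by move: Ulu; rewrite lE U_irr.
- by move: lw; rewrite lE eqxx.
Qed.

Let g_cut s t : g s t -> W s -> ~~ W t -> s = w /\ t = u.
Proof.
case/(two_switchP switchable) => [Ust _ vwN | sE _ | sE _ | sE _ | -> ->] // Ws Wt.
- have tv := W_exit Ws Ust Wt; rewrite tv in Ust.
  by rewrite (W_nbr_v Ws Ust) tv /same_edge !eqxx orbT in vwN.
- by rewrite sE (negbTE lNW) in Ws.
- by rewrite sE (negbTE vNW) in Ws.
- by rewrite sE (negbTE uNW) in Ws.
Qed.

Let switch_cycle_sub cy' : is_cycle g cy' -> is_cycle U cy'.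
Proof.
move=> g_cy'; case/and3P: (g_cy') => sz ucy' gcy'; rewrite /is_cycle sz ucy'.
apply: (cycle_from_next ucy') => x xcy'.
have lN : l \notin cy' := leaf_notin_cycle g_sym g_cy' g_leaf.
case: (two_switchP switchable (next_cycle gcy' xcy')) => [// | xE _ | _ nE | xE nE | xE nE].
- by rewrite -xE xcy' in lN.
- by rewrite -nE mem_next xcy' in lN.
- rewrite xE in xcy' nE; have := cut_edge_not_next g_sym g_cy' xcy' W_w uNW g_cut.
  by rewrite nE eqxx.
- rewrite xE in xcy' nE.
  have cutC s t : g s t -> ~~ W s -> ~~ ~~ W t -> s = u /\ t = w.
    by rewrite g_sym => gts Ws /negbNE Wt; have [-> ->] := g_cut gts Wt Ws.
  have := cut_edge_not_next (P := fun t => ~~ W t) g_sym g_cy' xcy' uNW _ cutC.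
  by rewrite nE eqxx negbK => /(_ W_w).
Qed.

Let g_vu : connect g v u.
Proof.
have gvz : g v z.
  rewrite /g two_switchE // U_sym Uzv /same_edge !eqxx (eq_sym v l) (eq_sym v u).
  by rewrite (negbTE lv) (negbTE uv) (negbTE zw) (negbTE zv) !andbF.
pose P t := (t == l) || connect g u t.
have closedP : closed (avoid U v) P.
  apply: (intro_closed (sym_connect_sym (avoid_sym v U_sym))) => s t /and3P[Ust sv tv].
  rewrite -[s \in P]/(P s) -[t \in P]/(P t) /P.
  case: (eqVneq s l) => [sE _ | sl /= gus].
    by rewrite sE in Ust; rewrite (l_leaf Ust) connect0 orbT.
  case: (eqVneq t l) => //= tl; apply: connect_trans gus (connect1 _).
  rewrite /g two_switchE // Ust /same_edge (negbTE sl) (negbTE tl) (negbTE sv) (negbTE tv).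
  by rewrite !andbF.
have /orP[/eqP zl | guz] : P z.
- rewrite -[P z]/(z \in P) -(closed_connect closedP uz).
  by rewrite -[u \in P]/(P u) /P connect0 orbT.
- by move: Uzv uv; rewrite zl => /l_leaf ->; rewrite eqxx.
apply: connect_trans (connect1 gvz) _.
by rewrite (sym_connect_sym g_sym).
Qed.

Lemma leaf_move_u_switch : u_switch U l u v w /\ g l v.
Proof.
case/andP: g_new => glv guw; split => //; split => //.
split; first split.
- exact: g_sym.
- exact: two_switch_irr.
- apply: two_switch_connected => //; first exact: connect_trans (connect1 glv) g_vu.
  exact: connect_trans g_vu (connect1 guw).
exists cy; split; last by move=> cy' /switch_cycle_sub; apply: cy_unique.
apply: two_switch_cycle => //; apply/negP => /cycle_edges_mem.
by apply/negP; apply: leaf_notin_cycle U_sym U_cy l_leaf.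
Qed.

End LeafMove.

Theorem lemma3p3 (T : finType) (U : rel T) (l u : T) :
  unicyclic U -> U l u -> deg U l = 1 -> on_cycle U u ->
  (forall v : T, on_cycle U v -> v != u -> 2 < deg U v ->
     exists a b c d : T, u_switch U a b c d /\ two_switch U a b c d l v) /\
  (forall v : T, ~ on_cycle U v -> 2 <= deg U v ->
     exists a b c d : T, u_switch U a b c d /\ two_switch U a b c d l v).
Proof.
case=> [[U_sym U_irr] U_con [cy [U_cy cy_unique]]] Ulu dl onu.
have l_leaf y : U l y -> y = u := deg1_nbr dl Ulu.
have on_cy x : on_cycle U x <-> x \in cy.
  split=> [[cy' [U_cy' xcy']] | xcy]; last by exists cy.
  exact: eq_cycle_edges_mem (cy_unique _ U_cy') xcy'.
have ucy : u \in cy by apply/on_cy.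
have move_leaf v w z :=
  leaf_move_u_switch (v := v) (w := w) (z := z) U_sym U_irr U_con U_cy cy_unique Ulu l_leaf.
have vw_neq v w : U v w -> v != w by move=> Uvw; apply: contraTneq Uvw => ->; rewrite U_irr.
split=> [v /on_cy vcy vu dv | v vNcy dv].
- have Uvn : U v (next cy v) by case/and3P: U_cy => _ _ /next_cycle; apply.
  have ncy : next cy v \in cy by rewrite mem_next.
  have nv : next cy v != v by rewrite eq_sym vw_neq.
  have [w Uvw] : exists2 w, U v w & w \notin [set next cy v; prev cy v].
    by apply: deg_nbr_notin; apply: leq_ltn_trans dv; rewrite cards2; case: (_ != _).
  rewrite !inE negb_or => /andP[wn wp].
  exists l, u, v, w; apply: (move_leaf v w (next cy v) Uvw).
  + by rewrite U_sym.
  + by rewrite eq_sym.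
  + by apply: cycle_connect_avoid U_sym U_cy vcy ucy ncy _ nv; rewrite eq_sym.
  + apply/negP => /(cycle_edge_next_prev _ (vw_neq _ _ Uvw)).
    by case/and3P: U_cy => _ ucy' _ /(_ ucy') [] /eqP; apply/negP.
- have vNcy' : v \notin cy by apply/negP => /on_cy.
  have uv : u != v by apply: contraNneq vNcy' => <-.
  have [z uz Uzv] := connect_avoid_last (U_con u v) uv.
  have [w Uvw] : exists2 w, U v w & w \notin [set z] by apply: deg_nbr_notin; rewrite cards1.
  rewrite inE eq_sym => wz.
  exists l, u, v, w; apply: (move_leaf v w z Uvw Uzv wz uz).
  by apply: contra vNcy' => /cycle_edges_mem.
Qed.
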